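(* Let $\mathscr{A}$ be a finite alphabet, $\Xi\subseteq\mathscr{A}^{\mathbb{Z}}$ a subshift and $(\mathscr{G}_k)_{k\in\mathbb{N}}$ its GAP-graphs. (i) If $\Xi$ contains no periodic element, then for each $m\in\mathbb{N}$ there is $k_0\in\mathbb{N}$ such that for all $k\geq k_0$ the graph $\mathscr{G}_k$ has no closed path of length smaller than or equal to $m$; in particular the graphs $\mathscr{G}_k$ are simple for all sufficiently large $k$. (ii) If $\Xi$ contains an element $\eta$ of period $m$, then every $\mathscr{G}_k$ has a closed path of length $m$. (iii) If $\Xi=\mathrm{Orb}(\eta)$ where $\eta$ is periodic with period $m$, then $\mathscr{G}_k$ has no branching vertex for $k\geq m-1$.
   Context: $\mathscr{A}^{\mathbb{Z}}$ has the product topology and shift $(T\xi)(j)=\xi(j-1)$; a subshift is a non-empty closed $T$-invariant subset. $\eta$ is periodic if $T^n\eta=\eta$ for some $n\geq1$, and its period is the least such $n$; $\mathrm{Orb}(\eta)=\{T^n\eta:n\in\mathbb{Z}\}$. $\mathcal{D}(\Xi)$ is the set of finite subwords of elements of $\Xi$. The GAP-graph $\mathscr{G}_k$ has vertex set $\mathcal{D}(\Xi)\cap\mathscr{A}^k$, edge set $\mathcal{D}(\Xi)\cap\mathscr{A}^{k+1}$, edge $e=a_0\cdots a_k$ going from $\partial_0e=a_0\cdots a_{k-1}$ to $\partial_1e=a_1\cdots a_k$. A closed path of length $m$ is $(e_1,\dots,e_m)$ with $\partial_1e_i=\partial_0e_{i+1}$ and $\partial_1e_m=\partial_0e_1$.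 A graph is simple if no edge has equal origin and end and for any two vertices there is at most one edge from the first to the second. The degree of a vertex is its number of incoming plus outgoing edges; a vertex is dandling if it has only incoming or only outgoing edges; a vertex is branching if it is not dandling and has degree $>2$. *)

From mathcomp Require Import all_boot all_order all_algebra.
From mathcomp Require Import boolp.
Set Implicit Arguments. Unset Strict Implicit. Unset Printing Implicit Defensive.
Import Order.TTheory GRing.Theory Num.Theory.

Section Subshift.
Variable A : finType.

Definition config := int -> A.

Definition shiftn (n : int) (xi : config) : config := fun j => xi (j - n)%R.
Definition T (xi : config) : config := shiftn 1 xi.

(* closedness in the product topology (A discrete): a configuration all of
   whose central windows [-n,n] are matched by elements of Xi lies in Xi *)
Definition closed_conf (Xi : config -> Prop) : Prop :=
  forall xi : config,
    (forall n : nat, exists x, Xi x /\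
        forall j : int, (- (n%:Z) <= j <= n%:Z)%R -> x j = xi j) ->
    Xi xi.

Definition shift_invariant (Xi : config -> Prop) : Prop :=
  (forall xi, Xi xi -> Xi (T xi)) /\
  (forall xi, Xi xi -> exists x, Xi x /\ T x = xi).

Definition subshift (Xi : config -> Prop) : Prop :=
  (exists xi, Xi xi) /\ closed_conf Xi /\ shift_invariant Xi.

Definition is_periodic (eta : config) : Prop :=
  exists n : nat, (0 < n)%N /\ iter n T eta = eta.

Definition has_period (eta : config) (m : nat) : Prop :=
  (0 < m)%N /\ iter m T eta = eta /\
  forall n : nat, (0 < n)%N -> iter n T eta = eta -> (m <= n)%N.

Definition Orb (eta : config) : config -> Prop :=
  fun xi => exists n : int, xi = shiftn n eta.

Definition subword_at (xi : config) (i : int) (len : nat) : seq A :=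
  [seq xi (i + j%:Z)%R | j <- iota 0 len].

Definition inD (Xi : config -> Prop) (w : seq A) : Prop :=
  exists xi i, Xi xi /\ w = subword_at xi i (size w).

Definition vertex (Xi : config -> Prop) (k : nat) (v : seq A) : Prop :=
  size v = k /\ inD Xi v.
Definition edge (Xi : config -> Prop) (k : nat) (e : seq A) : Prop :=
  size e = k.+1 /\ inD Xi e.
Definition d0 (e : seq A) : seq A := take (size e).-1 e.
Definition d1 (e : seq A) : seq A := behead e.

(* closed path (e_1,...,e_m), m >= 1, indexed 0..m-1 *)
Definition closed_path (Xi : config -> Prop) (k : nat) (p : seq (seq A)) : Prop :=
  (0 < size p)%N /\ (forall e, e \in p -> edge Xi k e) /\
  forall i, (i < size p)%N ->
    d1 (nth [::] p i) = d0 (nth [::] p (i.+1 %% size p)).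

Definition has_closed_path (Xi : config -> Prop) (k m : nat) : Prop :=
  exists p, size p = m /\ closed_path Xi k p.

Definition simple_graph (Xi : config -> Prop) (k : nat) : Prop :=
  (forall e, edge Xi k e -> d0 e <> d1 e) /\
  (forall e e', edge Xi k e -> edge Xi k e' ->
     d0 e = d0 e' -> d1 e = d1 e' -> e = e').

(* edges of G_k are the words of length k+1, counted via tuples *)
Definition in_deg (Xi : config -> Prop) (k : nat) (v : seq A) : nat :=
  #|[set e : k.+1.-tuple A | `[< edge Xi k (tval e) >] && (d1 (tval e) == v)]|.
Definition out_deg (Xi : config -> Prop) (k : nat) (v : seq A) : nat :=
  #|[set e : k.+1.-tuple A | `[< edge Xi k (tval e) >] && (d0 (tval e) == v)]|.
Definition degree Xi k v := (in_deg Xi k v + out_deg Xi k v)%N.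

Definition dandling (Xi : config -> Prop) (k : nat) (v : seq A) : Prop :=
  in_deg Xi k v = 0%N \/ out_deg Xi k v = 0%N.

Definition branching (Xi : config -> Prop) (k : nat) (v : seq A) : Prop :=
  vertex Xi k v /\ ~ dandling Xi k v /\ (2 < degree Xi k v)%N.

End Subshift.

From mathcomp Require Import all_boot all_order all_algebra.
From mathcomp Require Import boolp zify.
Set Implicit Arguments. Unset Strict Implicit. Unset Printing Implicit Defensive.
Import Order.TTheory GRing.Theory Num.Theory.

(** A closed path of length l in G_k spells a periodic word: consecutive edges overlap in
    k letters, so the first edge is a word of D(Xi) of length k+1 with period l.

    (i) If G_k had closed paths of length at most m for arbitrarily large k, all these
    words would have period m!; as there are finitely many patterns of length m!, a single
    pattern u would occur in arbitrarily long windows, and closedness would put the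
    periodic configuration ...uuu... into Xi.

    (ii) In an m-periodic eta, the m words of length k+1 starting at 0, ..., m-1 form a
    closed path.

    (iii) An m-periodic configuration has at most m factors of each length. Two edges
    leaving (entering) one vertex make it a right (left) special factor of length k; its
    suffixes (prefixes) are special too, so the number of factors of length n increases
    strictly up to n = k+1, forcing k+1 < m. *)


Lemma size_undup_map_lt (T1 T2 : eqType) (f : T1 -> T2) (s : seq T1) x y :
  x \in s -> y \in s -> x != y -> f x = f y -> (size (undup (map f s)) < size s)%N.
Proof.
move=> xs ys ne_xy fxy; rewrite -(size_map f) ltn_size_undup.
apply: contra ne_xy => /(uniqP (f x)) f_inj; apply/eqP.
have nth_f z : z \in s -> nth (f x) (map f s) (index z s) = f z.
  by move=> zs; rewrite (nth_map z) ?index_mem ?nth_index.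
rewrite -(nth_index x xs) -(nth_index x ys); congr nth; apply: f_inj.
- by rewrite inE size_map index_mem.
- by rewrite inE size_map index_mem.
by rewrite !nth_f.
Qed.

Lemma antitone_choice (U : finType) (P : nat -> U -> Prop) :
  (forall K K' u, (K <= K')%N -> P K' u -> P K u) ->
  (forall K, exists u, P K u) -> exists u, forall K, P K u.
Proof.
move=> P_anti P_ex; apply: contrapT => /forallNP no_u.
have [K not_PK] : exists K : U -> nat, forall u, ~ P (K u) u.
  by have [K hK] := choice (fun u => (existsNP _).2 (no_u u)); exists K.
have [u Pu] := P_ex (\max_u K u).
exact: not_PK u (P_anti _ _ _ (leq_bigmax u) Pu).
Qed.

Section Subwords.
Variable A : finType.
Implicit Types (x y xi eta : config A) (i j z : int) (n t : nat).

Lemma shiftnD (a b : int) xi : shiftn a (shiftn b xi) = shiftn (a + b)%R xi.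
Proof. by apply: funext => j; rewrite /shiftn opprD addrA. Qed.

Lemma shiftn0 xi : shiftn 0 xi = xi.
Proof. by apply: funext => j; rewrite /shiftn subr0. Qed.

Lemma iterT n xi : iter n (@T A) xi = shiftn n%:Z xi.
Proof.
elim: n => [|n IH]; first by rewrite shiftn0.
by rewrite iterS IH /T shiftnD -addn1 PoszD addrC.
Qed.

Lemma size_subword xi i n : size (subword_at xi i n) = n.
Proof. by rewrite size_map size_iota. Qed.

Lemma nth_subword a xi i n t : (t < n)%N -> nth a (subword_at xi i n) t = xi (i + t%:Z)%R.
Proof. by move=> lt_tn; rewrite (nth_map 0%N) ?size_iota // nth_iota. Qed.

Lemma eq_subword x y i i' n :
  subword_at x i n = subword_at y i' n <->
  forall t, (t < n)%N -> x (i + t%:Z)%R = y (i' + t%:Z)%R.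
Proof.
split=> [eq_xy t lt_tn | eq_xy].
  by have := congr1 (nth (x 0) ^~ t) eq_xy; rewrite /= !nth_subword.
by apply/eq_in_map => t; rewrite mem_iota => /andP[_ lt_tn]; apply: eq_xy.
Qed.

Lemma take_subword xi i n : take n (subword_at xi i n.+1) = subword_at xi i n.
Proof. by rewrite /subword_at -addn1 iotaD map_cat take_size_cat // size_map size_iota. Qed.

Lemma d0_subword xi i n : d0 (subword_at xi i n.+1) = subword_at xi i n.
Proof. by rewrite /d0 size_subword take_subword. Qed.

Lemma d1_subword xi i n : d1 (subword_at xi i n.+1) = subword_at xi (i + 1)%R n.
Proof.
rewrite /d1 /subword_at /= -add1n iotaDl -map_comp.
by apply: eq_map => t /=; rewrite PoszD addrA.
Qed.

Lemma subword_shiftn z xi i n : subword_at (shiftn z xi) i n = subword_at xi (i - z)%R n.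
Proof. by apply/eq_subword => t _; rewrite /shiftn addrAC. Qed.

Lemma periodic_window_modn xi i l L k : (0 < l)%N -> (l %| L)%N ->
  (forall t, (t + l <= k)%N -> xi (i + (t + l)%N%:Z)%R = xi (i + t%:Z)%R) ->
  forall t, (t <= k)%N -> xi (i + t%:Z)%R = xi (i + (t %% L)%N%:Z)%R.
Proof.
move=> l_gt0 l_dvd_L per.
have per_modl t : (t <= k)%N -> xi (i + t%:Z)%R = xi (i + (t %% l)%N%:Z)%R.
  elim/ltn_ind: t => t IH le_tk; have [lt_tl|le_lt] := ltnP t l; first by rewrite modn_small.
  rewrite -{1 2}(subnK le_lt) modnDr per ?subnK //; apply: IH; lia.
move=> t le_tk; rewrite per_modl // [in RHS]per_modl ?(leq_trans (leq_mod _ _)) //.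
by rewrite modn_dvdm.
Qed.

End Subwords.

Section PeriodicConfig.
Variables (A : finType) (eta : config A) (m : nat).
Hypotheses (m_gt0 : (0 < m)%N) (eta_per : iter m (@T A) eta = eta).
Implicit Types (i j : int) (n : nat).

Lemma periodicD j : eta (j + m%:Z)%R = eta j.
Proof.
by have := congr1 (fun x => x (j + m%:Z)%R) eta_per; rewrite iterT /shiftn addrK => <-.
Qed.

Lemma periodic_modz j : eta j = eta (j %% m%:Z)%Z.
Proof.
have perM n j' : eta (j' + (n * m)%N%:Z)%R = eta j'.
  elim: n j' => [|n IH] j'; first by rewrite mul0n addr0.
  by rewrite mulSnr PoszD addrA periodicD IH.
rewrite {1}(divz_eq j m%:Z); case: (j %/ m%:Z)%Z => n.
  by rewrite addrC -PoszM perM.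
by rewrite -(perM n.+1 (Negz n * m%:Z + (j %% m%:Z)%Z)%R); congr eta; lia.
Qed.

Lemma subword_modz i n : subword_at eta i n = subword_at eta (i %% m%:Z)%Z n.
Proof. by apply/eq_subword => t _; rewrite periodic_modz [RHS]periodic_modz modzDml. Qed.

Lemma periodic_closed_path (Xi : config A -> Prop) k : Xi eta -> has_closed_path Xi k m.
Proof.
move=> Xeta; exists (mkseq (fun n => subword_at eta (Posz n) k.+1) m).
rewrite /closed_path size_mkseq; split=> //; split=> //; split.
  move=> e /mapP [n _ ->]; split; first exact: size_subword.
  by exists eta, (Posz n); rewrite size_subword.
move=> n lt_nm; rewrite !nth_mkseq ?ltn_pmod //.
rewrite d1_subword d0_subword subword_modz [RHS]subword_modz; congr subword_at.
by rewrite -modz_nat modz_mod -addn1 PoszD.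
Qed.

Definition factors n := undup [seq subword_at eta (Posz t) n | t <- iota 0 m].

Lemma size_factors n : (size (factors n) <= m)%N.
Proof. by rewrite (leq_trans (size_undup _)) // size_map size_iota. Qed.

Lemma mem_factors i n : subword_at eta i n \in factors n.
Proof.
rewrite subword_modz mem_undup; apply/mapP; exists `|(i %% m%:Z)%Z|%N.
  by rewrite mem_iota; lia.
by congr subword_at; lia.
Qed.

Lemma factors_lt n (f : seq A -> seq A) i1 i2 :
  (forall i, exists i', f (subword_at eta i' n.+1) = subword_at eta i n) ->
  subword_at eta i1 n.+1 != subword_at eta i2 n.+1 ->
  f (subword_at eta i1 n.+1) = f (subword_at eta i2 n.+1) ->
  (size (factors n) < size (factors n.+1))%N.
Proof.
move=> f_onto ne_w eq_fw.
apply: leq_ltn_trans (size_undup_map_lt (mem_factors i1 _) (mem_factors i2 _) ne_w eq_fw).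
apply: uniq_leq_size; first exact: undup_uniq.
move=> w; rewrite {1}/factors mem_undup => /mapP [t _ ->]; have [i' <-] := f_onto (Posz t).
by rewrite mem_undup; apply/map_f/mem_factors.
Qed.

Lemma factors_growth k :
  (forall n, (n <= k)%N -> (size (factors n) < size (factors n.+1))%N) -> (k.+1 < m)%N.
Proof.
move=> grow; have lower n : (n <= k.+1)%N -> (n < size (factors n))%N.
  elim: n => [_|n IH lt_nk]; first by case: (factors 0) (mem_factors 0 0).
  exact: leq_ltn_trans (IH (ltnW lt_nk)) (grow n lt_nk).
exact: leq_trans (lower _ (leqnn _)) (size_factors _).
Qed.

Lemma right_special_bound k i1 i2 :
  subword_at eta i1 k.+1 != subword_at eta i2 k.+1 ->
  subword_at eta i1 k = subword_at eta i2 k -> (k.+1 < m)%N.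
Proof.
move=> ne_w /eq_subword eq_prefix.
have ne_last : eta (i1 + k%:Z)%R != eta (i2 + k%:Z)%R.
  apply: contra ne_w => /eqP eq_last; apply/eqP/eq_subword => t.
  by rewrite ltnS leq_eqVlt => /predU1P[-> //|]; apply: eq_prefix.
apply: factors_growth => n le_nk.
apply: (factors_lt (f := take n) (i1 := (i1 + (k - n)%N%:Z)%R) (i2 := (i2 + (k - n)%N%:Z)%R)).
- by move=> i; exists i; rewrite take_subword.
- apply: contra ne_last => /eqP /eq_subword /(_ n (ltnSn n)).
  by rewrite -!addrA -!PoszD subnK // => ->.
- rewrite !take_subword; apply/eq_subword => t lt_tn.
  by rewrite -!addrA -!PoszD; apply: eq_prefix; lia.
Qed.

Lemma left_special_bound k i1 i2 :
  subword_at eta i1 k.+1 != subword_at eta i2 k.+1 ->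
  subword_at eta (i1 + 1)%R k = subword_at eta (i2 + 1)%R k -> (k.+1 < m)%N.
Proof.
move=> ne_w /eq_subword eq_suffix.
have ne_first : eta i1 != eta i2.
  apply: contra ne_w => /eqP eq_first; apply/eqP/eq_subword => -[|t] lt_tk.
    by rewrite !addr0.
  by have := eq_suffix t lt_tk; rewrite -!addrA -[(1 + _)%R]PoszD add1n.
apply: factors_growth => n le_nk.
apply: (factors_lt (f := @d1 A) (i1 := i1) (i2 := i2)).
- by move=> i; exists (i - 1)%R; rewrite d1_subword subrK.
- apply: contra ne_first => /eqP /eq_subword /(_ 0%N (ltn0Sn n)).
  by rewrite !addr0 => ->.
- rewrite !d1_subword; apply/eq_subword => t lt_tn; apply: eq_suffix; lia.
Qed.

End PeriodicConfig.

(* The default letter [a0] is never read when [u] is non-empty. *)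
Definition cyclic (A : finType) (a0 : A) (u : seq A) : config A :=
  fun j => nth a0 u `|(j %% (size u)%:Z)%Z|%N.

Lemma cyclic_nat (A : finType) (a0 : A) u t : cyclic a0 u (Posz t) = nth a0 u (t %% size u).
Proof. by rewrite /cyclic modz_nat. Qed.

Lemma cyclic_periodic (A : finType) (a0 : A) u : iter (size u) (@T A) (cyclic a0 u) = cyclic a0 u.
Proof.
rewrite iterT; apply: funext => j.
by rewrite /shiftn /cyclic -[in RHS](subrK (Posz (size u)) j) modzDr.
Qed.

Section Subshift.
Variables (A : finType) (Xi : config A -> Prop).
Implicit Types (x xi : config A) (i z : int) (n t k l : nat).

Lemma shift_invariant_shiftn z xi : shift_invariant Xi -> Xi xi -> Xi (shiftn z xi).
Proof.
move=> [Xi_T Xi_Tinv] Xxi.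
have shift_nat n x : Xi x -> Xi (shiftn n%:Z x).
  elim: n => [|n IH] Xx; first by rewrite shiftn0.
  by have := Xi_T _ (IH Xx); rewrite /T shiftnD -addn1 PoszD addrC.
have shift_neg1 x : Xi x -> Xi (shiftn (-1) x).
  by move=> /Xi_Tinv [y [Xy <-]]; rewrite /T shiftnD addNr shiftn0.
case: z => n; first exact: shift_nat.
elim: n => [|n IH]; first exact: shift_neg1.
by have := shift_neg1 _ IH; rewrite shiftnD.
Qed.

Lemma inD_subword_sub xi i j n n' : (j + n' <= n)%N ->
  inD Xi (subword_at xi i n) -> inD Xi (subword_at xi (i + j%:Z)%R n').
Proof.
move=> le_n [x [i' [Xx]]]; rewrite size_subword => /eq_subword eq_x.
exists x, (i' + j%:Z)%R; split=> //; rewrite size_subword; apply/eq_subword => t lt_tn'.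
by rewrite -!addrA -PoszD; apply: eq_x; lia.
Qed.

Lemma mem_of_subwords xi : closed_conf Xi -> shift_invariant Xi ->
  (forall i n, inD Xi (subword_at xi i n)) -> Xi xi.
Proof.
move=> Xi_closed Xi_inv xi_words; apply: Xi_closed => n.
have [x [i [Xx]]] := xi_words (- n%:Z)%R (n + n).+1.
rewrite size_subword => /eq_subword eq_x.
exists (shiftn (- (i + n%:Z))%R x); split; first exact: shift_invariant_shiftn.
move=> j /andP[le_nj le_jn]; set t := `|(j + Posz n)%R|%N.
have t_def : Posz t = (j + Posz n)%R by rewrite /t; lia.
rewrite /shiftn (_ : (j - - (i + Posz n))%R = (i + Posz t)%R); last by lia.
by rewrite -eq_x; [congr xi | ]; lia.
Qed.

Lemma cyclic_mem (a0 : A) u : closed_conf Xi -> shift_invariant Xi -> (0 < size u)%N ->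
  (forall n, inD Xi (subword_at (cyclic a0 u) 0 n)) -> Xi (cyclic a0 u).
Proof.
move=> Xi_closed Xi_inv u_gt0 prefixes; apply: mem_of_subwords => // i n.
rewrite (subword_modz u_gt0 (cyclic_periodic a0 u)).
have r_ge0 : (0 <= (i %% Posz (size u))%Z)%R by rewrite modz_ge0 // eqz_nat -lt0n.
have := inD_subword_sub (leqnn _) (prefixes (`|(i %% Posz (size u))%Z|%N + n)%N).
by rewrite add0r gez0_abs.
Qed.

Lemma closed_path_nth k p (a : A) j t : closed_path Xi k p -> (j + t <= k)%N ->
  nth a (nth [::] p 0) (j + t) = nth a (nth [::] p (t %% size p)) j.
Proof.
move=> [p_gt0 [p_edges p_linked]].
have size_p t' : size (nth [::] p (t' %% size p)) = k.+1.
  by apply: (p_edges _ _).1; rewrite mem_nth ?ltn_pmod.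
elim: t j => [|t IH] j le_jt; first by rewrite addn0 mod0n.
rewrite -addSnnS IH ?addSnnS //.
have mod_succ : ((t %% size p).+1 %% size p = t.+1 %% size p)%N.
  by rewrite -addn1 modnDml addn1.
have := congr1 (nth a ^~ j) (p_linked _ (ltn_pmod t p_gt0)).
by rewrite /d1 /d0 nth_behead mod_succ size_p nth_take => [-> //|]; lia.
Qed.

Lemma closed_path_periodic_window k l : has_closed_path Xi k l ->
  (0 < l)%N /\ exists xi i, Xi xi /\
    forall t, (t + l <= k)%N -> xi (i + (t + l)%N%:Z)%R = xi (i + t%:Z)%R.
Proof.
move=> [p [<- cp]]; have [p_gt0 [p_edges _]] := cp; split=> //.
have [size_p0 [xi [i [Xxi p0_eq]]]] := p_edges _ (mem_nth [::] p_gt0).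
exists xi, i; split=> // t le_tlk; rewrite size_p0 in p0_eq.
rewrite -!(nth_subword (xi 0) xi i (n := k.+1)) -?p0_eq ?(closed_path_nth _ cp le_tlk) ?modnn //.
all: lia.
Qed.

Lemma closed_path_cyclic_word (a0 : A) m k l : has_closed_path Xi k l -> (l <= m)%N ->
  exists u : (m`!).-tuple A, inD Xi (subword_at (cyclic a0 u) 0 k.+1).
Proof.
move=> /closed_path_periodic_window [l_gt0 [xi [i [Xxi per]]]] le_lm.
have per_fact := periodic_window_modn l_gt0 (dvdn_fact (m := l) (n := m) _) per.
have size_u : size (subword_at xi i m`!) == m`! by rewrite size_subword.
exists (Tuple size_u), xi, i; split=> //; rewrite size_subword; apply/eq_subword => t lt_tk.
rewrite add0r cyclic_nat /= size_subword nth_subword ?ltn_pmod ?fact_gt0 //.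
by rewrite -per_fact // l_gt0.
Qed.

Lemma simple_graph_of_no_loop k : (0 < k)%N -> ~ has_closed_path Xi k 1 -> simple_graph Xi k.
Proof.
move=> k_gt0 no_loop; split=> [e e_edge loop_e | e e' [size_e _] [size_e' _]].
  apply: no_loop; exists [:: e]; split=> //; split=> //; split.
    by move=> e'; rewrite inE => /eqP ->.
  by case=> // _; rewrite /= loop_e.
rewrite /d0 /d1 size_e size_e' /= {no_loop}.
case: e size_e => [//|a s] _; case: e' size_e' => [//|b s'] _ /=.
by case: k k_gt0 => [//|k] _ /= [-> _] ->.
Qed.

Lemma no_short_closed_paths : subshift Xi -> ~ (exists eta, Xi eta /\ is_periodic eta) ->
  forall m, exists k0, forall k, (k0 <= k)%N -> forall l, (l <= m)%N -> ~ has_closed_path Xi k l.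
Proof.
move=> [[xi0 _] [Xi_closed Xi_inv]] aperiodic m; apply: contrapT => short_paths.
pose a0 := xi0 0.
pose P K (u : (m`!).-tuple A) := inD Xi (subword_at (cyclic a0 u) 0 K).
have P_anti K K' u : (K <= K')%N -> P K' u -> P K u.
  by move=> le_KK' /(inD_subword_sub (j := 0) le_KK'); rewrite addr0.
have P_ex K : exists u, P K u.
  apply: contrapT => /forallNP no_u; apply: short_paths; exists K => k le_Kk l le_lm cp.
  have [u Pu] := closed_path_cyclic_word a0 cp le_lm.
  exact: no_u u (P_anti _ _ _ (leqW le_Kk) Pu).
have [u Pu] := antitone_choice P_anti P_ex.
have u_gt0 : (0 < size u)%N by rewrite size_tuple fact_gt0.
apply: aperiodic; exists (cyclic a0 u); split; first exact: cyclic_mem.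
by exists (size u); rewrite u_gt0 cyclic_periodic.
Qed.

Lemma edge_subword_Orb (eta : config A) k e : (forall xi, Xi xi -> Orb eta xi) ->
  edge Xi k e -> exists i, e = subword_at eta i k.+1.
Proof.
move=> Xi_Orb [size_e [xi [i [/Xi_Orb [z ->] e_eq]]]].
by exists (i - z)%R; rewrite e_eq size_e subword_shiftn.
Qed.

End Subshift.

Section OrbitGraph.
Variables (A : finType) (Xi : config A -> Prop) (eta : config A) (m : nat).
Hypotheses (m_gt0 : (0 < m)%N) (eta_per : iter m (@T A) eta = eta).
Hypothesis Xi_Orb : forall xi, Xi xi -> Orb eta xi.

Lemma out_deg_le1 k v : (m <= k.+1)%N -> (out_deg Xi k v <= 1)%N.
Proof.
move=> le_mk; apply/card_le1_eqP => e1 e2; rewrite !inE.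
move=> /andP[/asboolP/(edge_subword_Orb Xi_Orb) [i1 e1_eq] /eqP e1_v].
move=> /andP[/asboolP/(edge_subword_Orb Xi_Orb) [i2 e2_eq] /eqP e2_v].
apply/eqP; apply: contraT => ne_e.
have ne_w : subword_at eta i1 k.+1 != subword_at eta i2 k.+1.
  by rewrite -e1_eq -e2_eq; apply: contra ne_e => /eqP /val_inj ->.
rewrite e1_eq e2_eq !d0_subword in e1_v e2_v.
have := right_special_bound m_gt0 eta_per ne_w (etrans e1_v (esym e2_v)).
by rewrite ltnNge le_mk.
Qed.

Lemma in_deg_le1 k v : (m <= k.+1)%N -> (in_deg Xi k v <= 1)%N.
Proof.
move=> le_mk; apply/card_le1_eqP => e1 e2; rewrite !inE.
move=> /andP[/asboolP/(edge_subword_Orb Xi_Orb) [i1 e1_eq] /eqP e1_v].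
move=> /andP[/asboolP/(edge_subword_Orb Xi_Orb) [i2 e2_eq] /eqP e2_v].
apply/eqP; apply: contraT => ne_e.
have ne_w : subword_at eta i1 k.+1 != subword_at eta i2 k.+1.
  by rewrite -e1_eq -e2_eq; apply: contra ne_e => /eqP /val_inj ->.
rewrite e1_eq e2_eq !d1_subword in e1_v e2_v.
have := left_special_bound m_gt0 eta_per ne_w (etrans e1_v (esym e2_v)).
by rewrite ltnNge le_mk.
Qed.

Lemma degree_le2 k v : (m <= k.+1)%N -> (degree Xi k v <= 2)%N.
Proof. by move=> le_mk; rewrite -[2]/(1 + 1)%N leq_add ?in_deg_le1 ?out_deg_le1. Qed.

End OrbitGraph.

Theorem proposition8 (A : finType) (Xi : config A -> Prop) (hXi : subshift Xi) :
  (* (i) *)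
  ((~ exists eta, Xi eta /\ is_periodic eta) ->
     (forall m : nat, exists k0 : nat, forall k : nat, (k0 <= k)%N ->
        forall l : nat, (l <= m)%N -> ~ has_closed_path Xi k l) /\
     (exists k0 : nat, forall k : nat, (k0 <= k)%N -> simple_graph Xi k)) /\
  (* (ii) *)
  (forall (eta : config A) (m : nat), Xi eta -> has_period eta m ->
     forall k : nat, has_closed_path Xi k m) /\
  (* (iii) *)
  (forall (eta : config A) (m : nat), has_period eta m ->
     (forall xi, Xi xi <-> Orb eta xi) ->
     forall k : nat, (m - 1 <= k)%N ->
       forall v, ~ branching Xi k v).
Proof.
split=> [aperiodic|]; first split.
- exact: no_short_closed_paths.
- have [k0 no_loop] := no_short_closed_paths hXi aperiodic 1.
  exists k0.+1 => k lt_k0k; apply: simple_graph_of_no_loop.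
    exact: leq_ltn_trans lt_k0k.
  exact: no_loop (ltnW lt_k0k) 1%N (leqnn 1).
split=> [eta m Xeta [m_gt0 [eta_per _]] k | eta m [m_gt0 [eta_per _]] Xi_eq k le_mk v].
  exact: periodic_closed_path m_gt0 eta_per _ _ Xeta.
have Xi_Orb xi : Xi xi -> Orb eta xi by move/Xi_eq.
case=> _ [_]; rewrite ltnNge (degree_le2 m_gt0 eta_per Xi_Orb) //; lia.
Qed.
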